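(* Let $\ell\ge 0$ and let $G=(X\uplus Z,E)$ be the graph with $|Z|=2^\ell$ and $|X|=\binom{2^\ell}{2}$ in which every pair $\{z_1,z_2\}$ of distinct vertices of $Z$ is joined by an edge, and for every such pair there is a distinct vertex $x\in X$ adjacent exactly to $z_1$ and $z_2$. An arbitrary vertex of $Z$ is the root. Fix a (possibly randomized) online algorithm $A$ for the online Steiner tree problem on $G$ (terminals from $X$ arrive one by one; after each arrival $A$ adds edges, never removing any, so that all terminals so far are connected to the root). Then for every subset $S\subseteq Z$ with $|S|=2^s$, $0\le s\le\ell$, there exists a request sequence $\sigma=\sigma_S$ of terminals from $X$ such that: (i) for every $x\in\sigma$, both neighbors of $x$ in $G$ lie in $S$; (ii) there exists $z^*\in S$ with $\mathbb{E}[\deg'_{A,\sigma}(z^* )]\ge s/2$; (iii) there exists an offline solution $\mathrm{OFF}$ connecting all terminals of $\sigma$ to the root with $\max_{z\in S}\deg_{\mathrm{OFF},\sigma}(z)\le 1$ and $\deg_{\mathrm{OFF},\sigma}(z)=0$ for all $z\in(Z\setminus S)\cup\{z^*\}$.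
   Context: For $z\in Z$, a (online or offline) solution $B$ and request sequence $\sigma$, $\deg_{B,\sigma}(z)$ denotes the number of neighbors of $z$ among vertices of $X$ in the subgraph produced by $B$ on $\sigma$ (edges between vertices of $Z$ are ignored), and $\deg'_{B,\sigma}(z)$ denotes the number of those neighbors of $z$ in $X$ (in the produced subgraph) that also appear in $\sigma$. Expectations are over the randomness of $A$. *)

From HB Require Import structures.
From mathcomp Require Import all_boot all_order all_algebra.
From mathcomp Require Import all_classical all_reals all_analysis.
Set Implicit Arguments. Unset Strict Implicit. Unset Printing Implicit Defensive.
Import Order.TTheory GRing.Theory Num.Theory.

(* X is in bijection with the 2-element subsets {z1,z2} of Z: the vertex x of X
   associated with the pair {z1,z2} is adjacent exactly to z1 and z2. *)
Definition Zv (l : nat) := 'I_(2 ^ l).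
Definition Xv (l : nat) := {A : {set Zv l} | #|A| == 2}.
Definition vert (l : nat) := (Xv l + Zv l)%type.

Definition adjG (l : nat) (u v : vert l) : bool :=
  match u, v with
  | inr a, inr b => a != b
  | inl x, inr z => z \in val x
  | inr z, inl x => z \in val x
  | inl _, inl _ => false
  end.

Definition EG (l : nat) : {set {set vert l}} :=
  [set e | [exists u, exists v, adjG u v && (e == [set u; v])]].

Definition connF (l : nat) (F : {set {set vert l}}) (u v : vert l) : bool :=
  connect (fun a b => [set a; b] \in F) u v.

Definition steiner_sol (l : nat) (r : Zv l) (sigma : seq (Xv l))
    (F : {set {set vert l}}) : Prop :=
  F \subset EG l /\ (forall x, x \in sigma -> connF F (inl x) (inr r)).

(* A deterministic online algorithm: alg sigma is the subgraph it has built after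
   the requests sigma (depends only on the prefix seen so far); initially empty,
   edges are never removed, and after each request all terminals so far are
   connected to the root. *)
Definition online_alg (l : nat) (r : Zv l)
    (alg : seq (Xv l) -> {set {set vert l}}) : Prop :=
  [/\ alg [::] = finset.set0,
      (forall sigma x, alg sigma \subset alg (rcons sigma x)) &
      (forall sigma, steiner_sol r sigma (alg sigma))].

Definition degB (l : nat) (F : {set {set vert l}}) (z : Zv l) : nat :=
  #|[set x : Xv l | [set inl x; inr z] \in F]|.

Definition degB' (l : nat) (F : {set {set vert l}}) (sigma : seq (Xv l))
    (z : Zv l) : nat :=
  #|[set x : Xv l | ([set inl x; inr z] \in F) && (x \in sigma)]|.

(* Randomized algorithm: a family of deterministic online algorithms indexed by
   a random seed w drawn from a probability space; measurability: the built
   subgraph is a random variable for every request sequence. *)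
Definition rand_measurable (l : nat) (d : measure_display) (Omega : measurableType d)
    (A : Omega -> seq (Xv l) -> {set {set vert l}}) : Prop :=
  forall sigma F, measurable [set w | A w sigma = F]%classic.

Definition Edeg' (R : realType) (l : nat) (d : measure_display) (Omega : measurableType d)
    (Pr : probability Omega R) (A : Omega -> seq (Xv l) -> {set {set vert l}})
    (sigma : seq (Xv l)) (z : Zv l) : \bar R :=
  (\int[Pr]_w ((degB' (A w sigma) sigma z)%:R)%:E)%E.

From HB Require Import structures.
From mathcomp Require Import all_boot all_order all_algebra.
From mathcomp Require Import all_classical all_reals all_analysis.
From mathcomp Require Import measurable_realfun.
Import Order.TTheory GRing.Theory Num.Theory.
Set Implicit Arguments. Unset Strict Implicit. Unset Printing Implicit Defensive.

(* Induction on s, with the requests of earlier phases as a history prefix.  Split S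
   into halves S1, S2, play the construction for S1 and then, after it, for S2; this
   yields hubs z1 and z2 whose expected deg' is at least s/2 each.  Then request the
   X-vertex x of the pair {z1, z2}.  The algorithm must join x to z1 or z2, and this
   edge is new for deg' because x was never requested before, so the expectations at
   z1 and z2 sum to at least s + 1 and one of them, z*, reaches (s + 1)/2.  Offline,
   every request is joined to one of its two endpoints, chosen injectively and never
   equal to z*: x takes the other one of z1, z2, and all earlier requests use
   endpoints in S1 minus z1 or S2 minus z2.  The root is joined to the rest of Z by
   Z-Z edges, which deg ignores. *)

Lemma uniq_map_inj_in (T U : eqType) (f : T -> U) (s : seq T) :
  uniq (map f s) -> {in s &, injective f}.
Proof.
elim: s => //= a s IH /andP[fa_notin /IH inj_f] x y.
rewrite !inE => /predU1P[->|xs] /predU1P[->|ys] // fxy.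
- by move: fa_notin; rewrite fxy map_f.
- by move: fa_notin; rewrite -fxy map_f.
- exact: inj_f.
Qed.

Lemma halve_set (T : finType) (S : {set T}) n : #|S| = (n + n)%N ->
  exists S1 S2 : {set T}, [/\ [disjoint S1 & S2], S1 :|: S2 = S, #|S1| = n & #|S2| = n].
Proof.
move=> card_S.
have /card_geqP[t [t_uniq t_size t_S]] : (n <= #|S|)%N by rewrite card_S leq_addr.
have sub_tS : [set z in t] \subset S by apply/fintype.subsetP => z; rewrite inE => /t_S.
exists [set z in t], (S :\: [set z in t]); split.
- by rewrite finset.disjoints_subset finset.setCD finset.subsetUr.
- apply/setP => z; rewrite !inE.
  by case: (boolP (z \in t)) => //= /t_S ->.
- by rewrite cardsE (card_uniqP t_uniq).
- by rewrite cardsDS // card_S cardsE (card_uniqP t_uniq) t_size addnK.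
Qed.

Section Graph.
Variable l : nat.
Implicit Types (x : Xv l) (z zs zo r : Zv l) (S : {set Zv l}).
Implicit Types (F : {set {set vert l}}) (m : seq (Xv l * Zv l)).

Lemma EG_edge_inl x (c : vert l) :
  [set inl x; c] \in EG l -> exists2 z, z \in val x & c = inr z.
Proof.
rewrite inE => /existsP[u /existsP[v /andP[uv /eqP e]]].
have /set2P u_xc : u \in [set inl x; c] by rewrite e set21.
have /set2P v_xc : v \in [set inl x; c] by rewrite e set22.
case: c e u_xc v_xc => [x'|z] e u_xc v_xc; move: uv.
- by case: u_xc => ->; case: v_xc => ->.
- by case: u_xc => ->; case: v_xc => -> //=; rewrite ?eqxx //; exists z.
Qed.

Lemma steiner_sol_terminal_edge r sigma F x :
  steiner_sol r sigma F -> x \in sigma ->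
  exists2 z, z \in val x & [set inl x; inr z] \in F.
Proof.
case=> sub_FE conn x_sigma.
case/connectP: (conn x x_sigma) => [[|c p]] //= /andP[xc _] _.
have [z xz cz] := EG_edge_inl (fintype.subsetP sub_FE _ xc).
by exists z; rewrite -?cz.
Qed.

Lemma degB'_add_new_edge F F' (sigma sigma' : seq (Xv l)) z x :
  F \subset F' -> {subset sigma <= sigma'} -> x \in sigma' -> x \notin sigma ->
  (degB' F sigma z + ([set inl x; inr z] \in F') <= degB' F' sigma' z)%N.
Proof.
move=> sFF' ss' x_s' x_s; rewrite /degB'.
set D := [set y | _ && (y \in sigma)]; set D' := [set y | _].
have sDD' : D \subset D'.
  apply/fintype.subsetP => y; rewrite !inE => /andP[yF ys].
  by rewrite (fintype.subsetP sFF' _ yF) ss'.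
case xzF: (_ \in F'); last by rewrite addn0 subset_leq_card.
have x_D : x \notin D by rewrite inE (negbTE x_s) andbF.
have := cardsU1 x D; rewrite x_D addn1 add1n => <-.
by apply: subset_leq_card; rewrite finset.subUset finset.sub1set inE xzF x_s' sDD'.
Qed.

Lemma degB'_join F1 F2 F (sigma1 sigma2 sigma : seq (Xv l)) x z1 z2 :
  F1 \subset F -> F2 \subset F ->
  {subset sigma1 <= sigma} -> {subset sigma2 <= sigma} ->
  x \in sigma -> x \notin sigma1 -> x \notin sigma2 -> val x = [set z1; z2] ->
  (exists2 z, z \in val x & [set inl x; inr z] \in F) ->
  (degB' F1 sigma1 z1 + degB' F2 sigma2 z2 + 1
     <= degB' F sigma z1 + degB' F sigma z2)%N.
Proof.
move=> sF1 sF2 ss1 ss2 x_s x_s1 x_s2 vx [z]; rewrite vx => /set2P[] -> xzF.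
- have := degB'_add_new_edge z1 sF1 ss1 x_s x_s1; rewrite xzF => le1.
  have le2 := degB'_add_new_edge z2 sF2 ss2 x_s x_s2.
  by rewrite addnAC; apply: leq_add le1 (leq_trans (leq_addr _ _) le2).
- have le1 := degB'_add_new_edge z1 sF1 ss1 x_s x_s1.
  have := degB'_add_new_edge z2 sF2 ss2 x_s x_s2; rewrite xzF => le2.
  by rewrite -addnA; apply: leq_add (leq_trans (leq_addr _ _) le1) le2.
Qed.

Definition offline_tree (r : Zv l) (m : seq (Xv l * Zv l)) : {set {set vert l}} :=
  [set [set inl xz.1; inr xz.2] | xz in m] :|: [set [set inr z; inr r] | z in [set~ r]].

Lemma offline_tree_steiner r m :
  all (fun xz : Xv l * Zv l => xz.2 \in val xz.1) m ->
  steiner_sol r (unzip1 m) (offline_tree r m).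
Proof.
move=> /allP m_adj; split.
- apply/fintype.subsetP => e; rewrite !inE.
  case/orP => [/imsetP[[x z] xz_m ->] | /imsetP[z zr ->]]; apply/existsP.
  + exists (inl x); apply/existsP; exists (inr z).
    by rewrite eqxx andbT; exact: m_adj xz_m.
  + exists (inr z); apply/existsP; exists (inr r).
    by rewrite eqxx andbT; move: zr; rewrite !inE.
- move=> x /mapP[[x' z] xz_m /= ->]; rewrite /connF.
  have x'z : [set inl x'; inr z] \in offline_tree r m.
    by rewrite inE; apply/orP; left; apply/imsetP; exists (x', z).
  apply: connect_trans (connect1 x'z) _.
  have [-> | zr] := eqVneq z r; first exact: connect0.
  by apply: connect1; rewrite inE; apply/orP; right; apply/imsetP; exists z; rewrite ?inE.
Qed.

Lemma offline_tree_XZ r m x z :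
  ([set inl x; inr z] \in offline_tree r m) = ((x, z) \in m).
Proof.
apply/idP/idP => [|xz_m]; last by rewrite inE; apply/orP; left; apply/imsetP; exists (x, z).
have x_e : (inl x : vert l) \in [set inl x; inr z] by rewrite set21.
have z_e : (inr z : vert l) \in [set inl x; inr z] by rewrite set22.
rewrite inE => /orP[]/imsetP[[x' z'] xz_m /= e]; rewrite e in x_e z_e.
- by case/set2P: x_e => // -[->]; case/set2P: z_e => // -[->].
- by case/set2P: x_e.
Qed.

Lemma degB_offline_tree r m z :
  degB (offline_tree r m) z = #|[set x | (x, z) \in m]|.
Proof. by apply: eq_card => x; rewrite [LHS]finset.in_set offline_tree_XZ finset.in_set. Qed.

Lemma degB_offline_tree_le1 r m z :
  uniq (unzip2 m) -> (degB (offline_tree r m) z <= 1)%N.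
Proof.
move=> m_uniq; rewrite degB_offline_tree; apply/card_le1_eqP => x y.
rewrite !inE => xz_m yz_m.
by case: (uniq_map_inj_in m_uniq xz_m yz_m erefl).
Qed.

Lemma degB_offline_tree_eq0 r m z :
  z \notin unzip2 m -> degB (offline_tree r m) z = 0%N.
Proof.
move=> z_m; rewrite degB_offline_tree; apply/eqP; rewrite cards_eq0; apply/eqP.
by apply/setP => x; rewrite !inE; apply: contraNF z_m => /(map_f snd).
Qed.

Definition endpoint_assignment (S : {set Zv l}) (zs : Zv l) m : bool :=
  all (fun xz : Xv l * Zv l => (val xz.1 \subset S) && (xz.2 \in val xz.1 :\ zs)) m
  && uniq (unzip2 m).

Lemma endpoint_assignment_ends S zs m z :
  endpoint_assignment S zs m -> z \in unzip2 m -> z \in S :\ zs.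
Proof.
case/andP => /allP m_ok _ /mapP[[y z'] yz_m ->] /=.
have /andP[/fintype.subsetP yS] := m_ok _ yz_m.
by rewrite !inE /= => /andP[-> /yS].
Qed.

Lemma endpoint_assignment_requests S zs m x :
  endpoint_assignment S zs m -> x \in unzip1 m -> val x \subset S.
Proof.
by case/andP => /allP m_ok _ /mapP[[y z] /m_ok /andP[yS _] ->].
Qed.

Lemma endpoint_assignment_request_notin S zs m x z :
  endpoint_assignment S zs m -> z \in val x -> z \notin S -> x \notin unzip1 m.
Proof.
move=> ok zx; apply: contra => /(endpoint_assignment_requests ok)/fintype.subsetP.
exact.
Qed.

Lemma endpoint_assignment_adj S zs m :
  endpoint_assignment S zs m -> all (fun xz : Xv l * Zv l => xz.2 \in val xz.1) m.
Proof.
case/andP => m_ok _; apply: sub_all m_ok => -[y z] /andP[_].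
by rewrite inE => /andP[].
Qed.

Lemma endpoint_assignment_widen S S' zs zs' m :
  S \subset S' -> zs' \notin unzip2 m ->
  endpoint_assignment S zs m -> endpoint_assignment S' zs' m.
Proof.
move=> sSS' zs'_m /andP[/allP m_ok m_uniq].
rewrite /endpoint_assignment m_uniq andbT; apply/allP => -[y z] yz_m /=.
have /andP[yS] := m_ok _ yz_m; rewrite !inE /= => /andP[_ zy].
rewrite (fintype.subset_trans yS sSS') zy andbT.
by apply: contraNneq zs'_m => <-; apply: (map_f snd yz_m).
Qed.

Lemma endpoint_assignment_join S1 S2 z1 z2 m1 m2 x zs zo :
  [disjoint S1 & S2] -> z1 \in S1 -> z2 \in S2 ->
  endpoint_assignment S1 z1 m1 -> endpoint_assignment S2 z2 m2 ->
  val x = [set z1; z2] -> zs \in val x -> zo \in val x -> zo != zs ->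
  endpoint_assignment (S1 :|: S2) zs (m1 ++ m2 ++ [:: (x, zo)]).
Proof.
move=> S12 z1S1 z2S2 ok1 ok2 vx zs_x zo_x zo_zs.
have ends1 z : z \in unzip2 m1 -> z \in S1 /\ z \notin val x.
  move/(endpoint_assignment_ends ok1); rewrite vx !inE => /andP[/negbTE -> zS1].
  by split => //; apply: contraTneq zS1 => ->; rewrite (disjointFl S12 z2S2).
have ends2 z : z \in unzip2 m2 -> z \in S2 /\ z \notin val x.
  move/(endpoint_assignment_ends ok2); rewrite vx !inE => /andP[/negbTE zz2 zS2].
  by rewrite zz2 orbF; split => //; apply: contraTneq zS2 => ->; rewrite (disjointFr S12 z1S1).
have avoid_x m :
    {in unzip2 m, forall z, z \notin val x} -> zs \notin unzip2 m /\ zo \notin unzip2 m.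
  by move=> m_x; split; apply/negP => /m_x; rewrite ?zs_x ?zo_x.
have [zs_m1 zo_m1] := avoid_x m1 (fun z z_m => (ends1 z z_m).2).
have [zs_m2 zo_m2] := avoid_x m2 (fun z z_m => (ends2 z z_m).2).
have /andP[all1 uniq1] := endpoint_assignment_widen (finset.subsetUl S1 S2) zs_m1 ok1.
have /andP[all2 uniq2] := endpoint_assignment_widen (finset.subsetUr S1 S2) zs_m2 ok2.
rewrite /endpoint_assignment !all_cat all1 all2 /= /unzip2 !map_cat !cat_uniq.
rewrite uniq1 uniq2 /= -!/(unzip2 _) (negbTE zo_m2).
rewrite has_cat /= (negbTE zo_m1) orbF !andbT in_setD1 zo_zs zo_x andbT.
rewrite vx finset.subUset !finset.sub1set !inE z1S1 z2S2 orbT orbF /=.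
apply/hasPn => z /ends2[zS2 _]; apply/negP => /ends1[zS1 _].
by rewrite (disjointFr S12 zS1) in zS2.
Qed.

End Graph.

Section OnlineAlgorithm.
Variables (l : nat) (r : Zv l) (alg : seq (Xv l) -> {set {set vert l}}).
Hypothesis alg_online : online_alg r alg.

Lemma online_alg_sub_cat sigma t : alg sigma \subset alg (sigma ++ t).
Proof.
case: alg_online => _ alg_rcons _.
elim/last_ind: t => [|t x IH]; first by rewrite cats0.
by rewrite -rcons_cat; apply: fintype.subset_trans IH (alg_rcons _ _).
Qed.

Lemma online_degB'_join p sigma1 sigma2 x sigma z1 z2 :
  sigma = sigma1 ++ sigma2 ++ [:: x] ->
  x \notin sigma1 -> x \notin sigma2 -> val x = [set z1; z2] ->
  (degB' (alg (p ++ sigma1)) sigma1 z1 + degB' (alg (p ++ sigma1 ++ sigma2)) sigma2 z2 + 1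
     <= degB' (alg (p ++ sigma)) sigma z1 + degB' (alg (p ++ sigma)) sigma z2)%N.
Proof.
move=> def_sigma x_s1 x_s2 vx.
have x_s : x \in sigma by rewrite def_sigma !mem_cat mem_seq1 eqxx !orbT.
have x_edge : exists2 z, z \in val x & [set inl x; inr z] \in alg (p ++ sigma).
  have [_ _ /(_ (p ++ sigma)) sol] := alg_online.
  by apply: steiner_sol_terminal_edge sol _; rewrite mem_cat x_s orbT.
apply: degB'_join x_s x_s1 x_s2 vx x_edge; rewrite ?def_sigma.
- by rewrite catA; apply: online_alg_sub_cat.
- by rewrite !catA; apply: online_alg_sub_cat.
- by move=> y ys; rewrite mem_cat ys.
- by move=> y ys; rewrite !mem_cat ys orbT.
Qed.

End OnlineAlgorithm.

Section NatExpectation.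
Variables (R : realType) (d : measure_display) (Omega : measurableType d).
Variable Pr : probability Omega R.
Local Open Scope classical_set_scope.
Local Open Scope ereal_scope.

Definition natE (X : Omega -> nat) : \bar R := \int[Pr]_w ((X w)%:R)%:E.

Definition nat_measurable (X : Omega -> nat) : Prop :=
  measurable_fun setT (fun w => ((X w)%:R : R)%:E).

Lemma measurable_fun_finite_fibers (T : finType) d' (U : measurableType d')
    (Y : Omega -> T) (h : T -> U) :
  (forall t, measurable [set w | Y w = t]) -> measurable_fun setT (h \o Y).
Proof.
move=> mY _ B mB; rewrite setTI.
have -> : (h \o Y) @^-1` B = \bigcup_(t in [set t | B (h t)]) [set w | Y w = t].
  by apply/seteqP; split => [w Bw | w [t /= Bt Yw]]; [exists (Y w) | rewrite /= Yw].
by apply: fin_bigcup_measurable; [exact: finite_finset | move=> t _; exact: mY].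
Qed.

Lemma nat_measurableD X Y :
  nat_measurable X -> nat_measurable Y -> nat_measurable (fun w => X w + Y w)%N.
Proof.
move=> mX mY; rewrite /nat_measurable.
under eq_fun do rewrite natrD EFinD.
exact: emeasurable_funD.
Qed.

Lemma natE_ge0 X : 0 <= natE X.
Proof. by apply: integral_ge0 => w _; rewrite lee_fin ler0n. Qed.

Lemma natE_cst n : natE (fun=> n) = n%:R%:E.
Proof.
rewrite /natE integral_cst // [X in _ * X](_ : _ = 1) ?mule1 //.
exact: probability_setT.
Qed.

Lemma natED X Y : nat_measurable X -> nat_measurable Y ->
  natE (fun w => X w + Y w)%N = natE X + natE Y.
Proof.
move=> mX mY; rewrite /natE.
under eq_integral do rewrite natrD EFinD.
by apply: ge0_integralD => // w _; rewrite lee_fin ler0n.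
Qed.

Lemma le_natE X Y : nat_measurable X -> nat_measurable Y ->
  (forall w, X w <= Y w)%N -> natE X <= natE Y.
Proof.
move=> mX mY XY.
by apply: ge0_le_integral => // w _; rewrite lee_fin ?ler0n ?ler_nat.
Qed.

Lemma natE_add1_le X1 X2 Y1 Y2 :
  nat_measurable X1 -> nat_measurable X2 -> nat_measurable Y1 -> nat_measurable Y2 ->
  (forall w, X1 w + X2 w + 1 <= Y1 w + Y2 w)%N ->
  natE X1 + natE X2 + 1 <= natE Y1 + natE Y2.
Proof.
move=> mX1 mX2 mY1 mY2 XY.
have m1 : nat_measurable (fun=> 1%N) by exact: measurable_cst.
have -> : 1 = natE (fun=> 1%N) by rewrite natE_cst.
have mX12 := nat_measurableD mX1 mX2.
rewrite -natED // -natED // -natED //.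
by apply: le_natE => //; apply: nat_measurableD.
Qed.

End NatExpectation.

Lemma lee_or_of_double_le (R : realDomainType) (t a b : \bar R) :
  (t + t <= a + b)%E -> (t <= a)%E \/ (t <= b)%E.
Proof.
move=> tt_ab; have [t_a | a_t] := leP t a; [by left | right].
rewrite leNgt; apply: contraTN tt_ab => b_t.
by rewrite -ltNge; apply: lteD.
Qed.

Section Adversary.
Variables (R : realType) (l : nat) (r : Zv l).
Variables (d : measure_display) (Omega : measurableType d) (Pr : probability Omega R).
Variable A : Omega -> seq (Xv l) -> {set {set vert l}}.
Hypotheses (A_online : forall w, online_alg r (A w)) (A_meas : rand_measurable A).

Definition expected_deg' (q sigma : seq (Xv l)) (z : Zv l) : \bar R :=
  natE Pr (fun w => degB' (A w q) sigma z).

Lemma nat_measurable_degB' q sigma z :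
  nat_measurable R (fun w => degB' (A w q) sigma z).
Proof.
exact: (measurable_fun_finite_fibers (fun F => ((degB' F sigma z)%:R : R)%:E) (A_meas q)).
Qed.

Lemma expected_deg'_join p sigma1 sigma2 x sigma z1 z2 :
  sigma = sigma1 ++ sigma2 ++ [:: x] ->
  x \notin sigma1 -> x \notin sigma2 -> val x = [set z1; z2] ->
  (expected_deg' (p ++ sigma1) sigma1 z1
     + expected_deg' (p ++ sigma1 ++ sigma2) sigma2 z2 + 1
   <= expected_deg' (p ++ sigma) sigma z1 + expected_deg' (p ++ sigma) sigma z2)%E.
Proof.
move=> def_sigma x_s1 x_s2 vx.
apply: natE_add1_le; try exact: nat_measurable_degB'.
by move=> w; have := online_degB'_join (A_online w) p def_sigma x_s1 x_s2 vx.
Qed.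

Lemma adversary_sequence s (S : {set Zv l}) (p : seq (Xv l)) : #|S| = (2 ^ s)%N ->
  exists m, exists2 zs, zs \in S & endpoint_assignment S zs m /\
    ((s%:R / 2 : R)%:E <= expected_deg' (p ++ unzip1 m) (unzip1 m) zs)%E.
Proof.
elim: s S p => [|s IH] S p; rewrite ?expnS ?mul2n -?addnn => card_S.
  have /cards1P[z ->] : #|S| == 1%N by rewrite card_S.
  exists (Nil (Xv l * Zv l)), z; first exact: set11.
  by split => //; rewrite mul0r; apply: natE_ge0.
have [S1 [S2 [S12 S1US2 card_S1 card_S2]]] := halve_set card_S.
have [m1 [z1 z1S1 [ok1 E1]]] := IH S1 p card_S1.
have [m2 [z2 z2S2 [ok2 E2]]] := IH S2 (p ++ unzip1 m1) card_S2.
rewrite -catA in E2.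
have z12 : z1 != z2 by apply: contraTneq z2S2 => <-; rewrite (disjointFr S12 z1S1).
have x2 : #|[set z1; z2]| == 2 by rewrite cards2 z12.
pose x : Xv l := exist _ [set z1; z2] x2.
have vx : val x = [set z1; z2] by [].
have x_m1 : x \notin unzip1 m1.
  apply: (endpoint_assignment_request_notin (x := x)) ok1 (set22 z1 z2) _.
  by rewrite (disjointFl S12).
have x_m2 : x \notin unzip1 m2.
  apply: (endpoint_assignment_request_notin (x := x)) ok2 (set21 z1 z2) _.
  by rewrite (disjointFr S12).
set sigma := unzip1 m1 ++ unzip1 m2 ++ [:: x].
have sigma_m zo : unzip1 (m1 ++ m2 ++ [:: (x, zo)]) = sigma by rewrite /unzip1 !map_cat.
have choose zs zo : zs \in val x -> zo \in val x -> zo != zs ->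
    ((s.+1%:R / 2 : R)%:E <= expected_deg' (p ++ sigma) sigma zs)%E ->
    exists m, exists2 zs, zs \in S & endpoint_assignment S zs m /\
      ((s.+1%:R / 2 : R)%:E <= expected_deg' (p ++ unzip1 m) (unzip1 m) zs)%E.
  move=> zs_x zo_x zo_zs E; exists (m1 ++ m2 ++ [:: (x, zo)]), zs.
    by rewrite -S1US2 inE; move: zs_x; rewrite vx => /set2P[] ->; rewrite ?z1S1 ?z2S2 ?orbT.
  rewrite sigma_m -S1US2; split => //.
  exact: endpoint_assignment_join S12 z1S1 z2S2 ok1 ok2 vx zs_x zo_x zo_zs.
have sum_le : ((s.+1%:R / 2 : R)%:E + (s.+1%:R / 2 : R)%:E
    <= expected_deg' (p ++ sigma) sigma z1 + expected_deg' (p ++ sigma) sigma z2)%E.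
  have <- : ((s%:R / 2 : R)%:E + (s%:R / 2 : R)%:E + 1
             = (s.+1%:R / 2 : R)%:E + (s.+1%:R / 2 : R)%:E)%E.
    by rewrite -!EFinD -!splitr natr1.
  exact: le_trans (leeD (leeD E1 E2) (lexx _))
    (expected_deg'_join p (erefl sigma) x_m1 x_m2 vx).
case/lee_or_of_double_le: sum_le => E.
- by apply: (choose z1 z2) E; rewrite ?vx ?set21 ?set22 // eq_sym.
- by apply: (choose z2 z1) E; rewrite ?vx ?set21 ?set22.
Qed.

End Adversary.

Theorem lemma4 (R : realType) (l : nat) (r : Zv l)
    (d : measure_display) (Omega : measurableType d) (Pr : probability Omega R)
    (A : Omega -> seq (Xv l) -> {set {set vert l}})
    (HA : forall w, online_alg r (A w))
    (Hmeas : rand_measurable A)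
    (s : nat) (S : {set Zv l}) (hs : (s <= l)%N) (hS : #|S| = (2 ^ s)%N) :
  exists sigma : seq (Xv l),
    (forall x, x \in sigma -> val x \subset S) /\
    exists2 zstar, zstar \in S &
      ((s%:R / 2 : R)%:E <= Edeg' Pr A sigma zstar)%E /\
      exists OFF : {set {set vert l}},
        steiner_sol r sigma OFF /\
        (forall z, z \in S -> (degB OFF z <= 1)%N) /\
        (forall z, (z \notin S) || (z == zstar) -> degB OFF z = 0%N).
Proof.
have [m [zs zs_S [ok E]]] := adversary_sequence Pr HA Hmeas [::] hS.
exists (unzip1 m); split => [x|]; first exact: endpoint_assignment_requests ok.
exists zs => //; split; first exact: E.
exists (offline_tree r m); split; last split.
- exact/offline_tree_steiner/(endpoint_assignment_adj ok).
- by move=> z _; apply: degB_offline_tree_le1; case/andP: ok.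
- move=> z z_out; apply: degB_offline_tree_eq0.
  apply: contraL z_out => /(endpoint_assignment_ends ok).
  by rewrite !inE => /andP[/negbTE -> ->].
Qed.
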